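(* For $k\ge1$, let $\mathcal B_k$ be the set of $k\times k$ symmetric matrices over $\mathbb F_2$ of rank $k-1$ with every row sum $0$. Then $\#\mathcal B_k=u_k\cdot2^{\binom k2}$, where $u_k=\prod_{i=1}^{\lfloor k/2\rfloor}(1-2^{1-2i})$. *)

From HB Require Import structures.
From mathcomp Require Import all_boot all_order all_algebra.
Set Implicit Arguments. Unset Strict Implicit. Unset Printing Implicit Defensive.
Import Order.TTheory GRing.Theory Num.Theory.

Definition Bset (k : nat) : {set 'M['F_2]_k} :=
  [set A : 'M['F_2]_k | [&& trmx A == A, (\rank A == k.-1)%N
                         & [forall i, (\sum_j A i j == 0)%R]]].

Definition u_k (k : nat) : rat :=
  \prod_(1 <= i < (k./2).+1) (1 - (2%:R ^- (2 * i - 1)%N : rat))%R.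

(* Write s_n for the number of invertible symmetric n x n matrices over F_2.
   Deleting the first row and column of A in B_(1+n) leaves a symmetric B with
   rank B = rank A: the zero row sums force the deleted entries, and then
   A = M^T B M with M = (-1 | I) of full row rank, 1 the all-ones column.
   Hence #B_(1+n) = s_n.
   Split a symmetric matrix as ((a, v^T), (v, B)).  For a = 1 it is invertible
   iff the Schur complement B - v v^T is, contributing 2^n s_n; for a = 0 and
   v = 0 it is singular; for a = 0 the count depends only on v up to the
   congruence B |-> P B P^T, and for v = e_1 a hyperbolic plane splits off,
   contributing 2^n s_(n-1) for each of the 2^n - 1 nonzero v.  This
   recurrence solves to s_(n+1) = (2^(n+1) - [n+1 odd]) s_n, which telescopes
   to the product u_k 2^(k choose 2). *)

From HB Require Import structures.
From mathcomp Require Import all_boot all_order all_algebra.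
From mathcomp Require Import zify ring.
Import Order.TTheory GRing.Theory Num.Theory.
Set Implicit Arguments. Unset Strict Implicit. Unset Printing Implicit Defensive.
Local Open Scope ring_scope.

Section BlockSums.
Variable R : finType.

Lemma trmx11 (a : 'M[R]_1) : a^T = a.
Proof. by apply/matrixP => i j; rewrite mxE !ord1. Qed.

Lemma sum_block_mx m1 m2 n1 n2 (g : 'M[R]_(m1 + m2, n1 + n2) -> nat) :
  (\sum_A g A = \sum_(Aul : 'M_(m1, n1)) \sum_(Aur : 'M_(m1, n2))
     \sum_(Adl : 'M_(m2, n1)) \sum_(Adr : 'M_(m2, n2))
     g (block_mx Aul Aur Adl Adr))%N.
Proof.
rewrite (reindex (fun p : _ * (_ * (_ * _)) =>
            block_mx p.1 p.2.1 p.2.2.1 p.2.2.2)) /=; last first.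
  exists (fun A => (ulsubmx A, (ursubmx A, (dlsubmx A, drsubmx A))))
    => [[a [u [v B]]] _ | A _] /=; last by rewrite submxK.
  by rewrite block_mxKul block_mxKur block_mxKdl block_mxKdr.
rewrite -(pair_bigA _ (fun a q => g (block_mx a q.1 q.2.1 q.2.2))) /=.
apply: eq_bigr => a _.
rewrite -(pair_bigA _ (fun u q => g (block_mx a u q.1 q.2))) /=.
by apply: eq_bigr => u _; rewrite -(pair_bigA _ (fun v B => g (block_mx a u v B))).
Qed.

Lemma tr_block_mx_sym m (a : 'M[R]_1) (u : 'rV_m) (v : 'cV_m) (B : 'M_m) :
  ((block_mx a u v B)^T == block_mx a u v B) = (u == v^T) && (B^T == B).
Proof.
rewrite tr_block_mx trmx11.
apply/eqP/andP => [/eq_block_mx [_ -> _ ->] | [/eqP-> /eqP->]] //.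
by rewrite trmxK.
Qed.

Lemma sum_sym_block m (f : 'M[R]_(1 + m) -> nat) :
  (\sum_(A | A^T == A) f A = \sum_(a : 'M_1) \sum_(v : 'cV_m)
     \sum_(B | B^T == B) f (block_mx a v^T v B))%N.
Proof.
rewrite big_mkcond sum_block_mx; apply: eq_bigr => a _.
rewrite exchange_big /=; apply: eq_bigr => v _.
rewrite (bigD1 v^T) //= [X in (_ + X)%N]big1 ?addn0; last first.
  by move=> u /negbTE neq; apply: big1 => B _; rewrite tr_block_mx_sym neq.
by rewrite [RHS]big_mkcond; apply: eq_bigr => B _; rewrite tr_block_mx_sym eqxx.
Qed.

End BlockSums.

Section Invertibility.
Variable R : comUnitRingType.

Lemma unitmx_castmx m n (e : m = n) (A : 'M[R]_m) :
  (castmx (e, e) A \in unitmx) = (A \in unitmx).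
Proof. by case: n / e; rewrite castmx_id. Qed.

Lemma unitmx_block_schur m n (A K : 'M[R]_m) (u : 'M_(m, n)) (w : 'M_(n, m))
    (B : 'M_n) :
  A *m K = 1%:M ->
  (block_mx A u w B \in unitmx) = (B - w *m K *m u \in unitmx).
Proof.
move=> AK; have KA := mulmx1C AK.
have -> : block_mx A u w B =
    block_mx 1%:M 0 (w *m K) 1%:M *m block_mx A u 0 (B - w *m K *m u).
  rewrite mulmx_block !mul1mx !mul0mx ?mulmx0 ?add0r ?addr0 -mulmxA KA mulmx1.
  by rewrite addrC subrK.
have [uA _] := mulmx1_unit AK.
by rewrite unitmx_mul !unitmxE det_lblock det_ublock !det1 !mul1r unitr1 unitrM
   -!unitmxE uA.
Qed.

Lemma unitmx_block0 m (B : 'M[R]_m) :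
  (block_mx (0 : 'M_1) 0 0 B \in unitmx) = false.
Proof. by rewrite unitmxE det_ublock det0 mul0r unitr0. Qed.

Lemma unitmx_hyperbolic_border n (d : 'M[R]_1) (x : 'cV_n) (C : 'M_n) :
  (block_mx (0 : 'M_1) (col_mx 1%:M 0)^T (col_mx 1%:M 0) (block_mx d x^T x C)
     \in unitmx) = (C \in unitmx).
Proof.
rewrite tr_col_mx trmx1 trmx0 block_mxAx unitmx_castmx.
rewrite (unitmx_block_schur (K := block_mx (- d) 1%:M 1%:M 0)).
  rewrite mul_row_block !mulmx0 !mul0mx !add0r ?addr0 mul_row_col.
  by rewrite mulmx0 mul0mx addr0 subr0.
rewrite mulmx_block !mul0mx !mul1mx !mulmx1 !mulmx0 !addr0 !add0r addNr.
by rewrite [RHS](scalar_mx_block 1 1).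
Qed.

End Invertibility.

Lemma mxrank_trmx_mulmx_free (F : fieldType) n p (B : 'M[F]_n) (M : 'M_(n, p)) :
  row_free M -> \rank (M^T *m B *m M) = \rank B.
Proof.
move=> freeM; rewrite mxrankMfree // -mxrank_tr trmx_mul trmxK mxrankMfree //.
exact: mxrank_tr.
Qed.

Lemma row_free_row_mx1 (F : fieldType) m n (o : 'M[F]_(n, m)) :
  row_free (row_mx o 1%:M).
Proof.
by apply/row_freeP; exists (col_mx 0 1%:M); rewrite mul_row_col mulmx0 add0r mulmx1.
Qed.

Lemma mxrank_sym_border (F : fieldType) n (B : 'M[F]_n) (o : 'cV_n) :
  B^T = B ->
  \rank (block_mx (- ((- (B *m o))^T *m o)) (- (B *m o))^T (- (B *m o)) B)
  = \rank B.
Proof.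
move=> symB; rewrite -(mxrank_trmx_mulmx_free B (row_free_row_mx1 (- o))).
rewrite tr_row_mx trmx1 mul_col_mx mul_col_row mul1mx mulmx1.
by rewrite !linearN /= trmx_mul symB !mulNmx mulmx1.
Qed.

Lemma mulmx_const1_eq0 (R : pzRingType) m n (A : 'M[R]_(m, n)) :
  (A *m const_mx 1 == 0 :> 'cV_m) = [forall i, \sum_j A i j == 0].
Proof.
have rowsumE i : (A *m (const_mx 1 : 'cV_n)) i 0 = \sum_j A i j.
  by rewrite mxE; apply: eq_bigr => j _; rewrite mxE mulr1.
apply/eqP/forallP => [h i | h]; first by rewrite -rowsumE h mxE.
by apply/matrixP => i j; rewrite (ord1 j) rowsumE mxE; apply/eqP/h.
Qed.

Lemma mulmx_block_const1_eq0 (R : pzRingType) n (a : 'M[R]_1) (u : 'rV_n)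
    (w : 'cV_n) (B : 'M_n) :
  (block_mx a u w B *m const_mx 1 == 0 :> 'cV_(1 + n)) =
  (a == - (u *m const_mx 1)) && (w == - (B *m const_mx 1)).
Proof.
have const11 : const_mx 1 = 1%:M :> 'M[R]_1.
  by apply/matrixP => i j; rewrite !mxE !ord1.
by rewrite -(col_mx_const 1 n) mul_block_col col_mx_eq0 const11 !mulmx1 !addr_eq0.
Qed.

Lemma mxF2_1_cases (a : 'M['F_2]_1) : a = 0 \/ a = 1%:M.
Proof.
have [a0|a1] : a 0 0 = 0 \/ a 0 0 = 1.
  by case: (a 0 0) => [[|[|//]] ?]; [left|right]; apply/val_inj.
by left; rewrite [a]mx11_scalar a0 raddf0.
by right; rewrite [a]mx11_scalar a1.
Qed.

Lemma sum_mxF2_1 (F : 'M['F_2]_1 -> nat) : (\sum_a F a = F 0%R + F 1%:M%R)%N.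
Proof.
have neq10 : 1%:M != 0 :> 'M['F_2]_1
  by apply/eqP => /matrixP/(_ 0 0)/eqP; rewrite !mxE oner_eq0.
rewrite (bigD1 0) // (bigD1 1%:M) //= ?big1 ?addn0 // => a /andP[a1 a0].
by case: (mxF2_1_cases a) a1 a0 => ->; rewrite eqxx.
Qed.

Lemma unit_mxF2_1 (c : 'M['F_2]_1) : c \in unitmx -> c = 1%:M.
Proof.
by case: (mxF2_1_cases c) => -> //; rewrite unitmxE det_mx11 mxE unitr0.
Qed.

Definition nsym_unit n :=
  (\sum_(B : 'M['F_2]_n | B^T == B) (B \in unitmx : nat))%N.

Definition nsym_unit_border m (v : 'cV['F_2]_m) :=
  (\sum_(B : 'M['F_2]_m | B^T == B)
     (block_mx (0 : 'M_1) v^T v B \in unitmx : nat))%N.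

Lemma nsym_unit_rec m :
  nsym_unit (1 + m) =
  (\sum_(v : 'cV_m | v != 0%R) nsym_unit_border v + 2 ^ m * nsym_unit m)%N.
Proof.
rewrite {1}/nsym_unit sum_sym_block sum_mxF2_1; congr (_ + _)%N.
  rewrite (bigD1 0) //= {1}/nsym_unit_border big1 ?add0n // => B _.
  by rewrite trmx0 unitmx_block0.
transitivity (\sum_(v : 'cV['F_2]_m) nsym_unit m)%N.
  apply: eq_bigr => v _; rewrite /nsym_unit (reindex_inj (addIr (v *m v^T))) /=.
  apply: eq_big => B.
    by rewrite linearD /= trmx_mul trmxK (inj_eq (addIr _)).
  by rewrite (unitmx_block_schur (K := 1%:M)) ?mulmx1 // addrK.
by rewrite sum_nat_const card_mx card_Fp // muln1.
Qed.

Lemma nsym_unit_border_congr n (v : 'cV['F_2]_n) (P : 'M_n) :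
  P \in unitmx -> nsym_unit_border (P *m v) = nsym_unit_border v.
Proof.
move=> uP; have uPT : P^T \in unitmx by rewrite unitmx_tr.
have congr_inj : injective (fun B : 'M['F_2]_n => P *m B *m P^T).
  move=> B1 B2 /(congr1 (mulmx^~ (invmx P^T))) /=; rewrite !mulmxK //.
  by move/(congr1 (mulmx (invmx P))); rewrite !mulKmx.
rewrite /nsym_unit_border (reindex_inj congr_inj) /=; apply: eq_big => B.
  by rewrite !trmx_mul trmxK mulmxA (inj_eq congr_inj).
move=> _; set D := block_mx (1%:M : 'M_1) 0 0 P.
have -> : block_mx 0 (P *m v)^T (P *m v) (P *m B *m P^T) =
          D *m block_mx 0 v^T v B *m D^T.
  rewrite tr_block_mx !trmx0 trmx1 !mulmx_block.
  by rewrite !mul0mx !mulmx0 !mul1mx !mulmx1 !addr0 !add0r trmx_mul.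
have uD : D \in unitmx by rewrite unitmxE det_ublock det1 mul1r -unitmxE.
by rewrite !unitmx_mul unitmx_tr uD andbT.
Qed.

Lemma unit_mulmx_col_e0 n (v : 'cV['F_2]_(1 + n)) : v != 0 ->
  exists2 P : 'M_(1 + n), P \in unitmx & P *m v = col_mx 1%:M 0.
Proof.
move=> nz_v; have rk_v : \rank v = 1%N.
  by apply/eqP; rewrite eqn_leq rank_leq_col lt0n mxrank_eq0 nz_v.
have ebase_v := mulmx_ebase v.
rewrite rk_v (unit_mxF2_1 (row_ebase_unit v)) mulmx1 pid_mx_col in ebase_v.
exists (invmx (col_ebase v)); first by rewrite unitmx_inv col_ebase_unit.
by rewrite -{2}ebase_v mulKmx ?col_ebase_unit.
Qed.

Lemma nsym_unit_border_e0 n :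
  nsym_unit_border (col_mx 1%:M 0 : 'cV['F_2]_(1 + n)) = (2 ^ n.+1 * nsym_unit n)%N.
Proof.
rewrite /nsym_unit_border sum_sym_block.
transitivity (\sum_(d : 'M['F_2]_1) \sum_(x : 'cV['F_2]_n) nsym_unit n)%N.
  apply: eq_bigr => d _; apply: eq_bigr => x _.
  by apply: eq_bigr => C _; rewrite unitmx_hyperbolic_border.
by rewrite !sum_nat_const !card_mx card_Fp // !muln1 mulnA -expnS.
Qed.

Lemma nsym_unit_rec2 n : nsym_unit n.+2 =
  (2 ^ n.+1 * nsym_unit n.+1 + (2 ^ n.+1 - 1) * (2 ^ n.+1 * nsym_unit n))%N.
Proof.
rewrite [nsym_unit n.+2](nsym_unit_rec (1 + n)) addnC; congr (_ + _)%N.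
transitivity (\sum_(v : 'cV['F_2]_(1 + n) | v != 0%R) 2 ^ n.+1 * nsym_unit n)%N.
  apply: eq_bigr => v nz_v; have [P uP Pv] := unit_mulmx_col_e0 nz_v.
  by rewrite -(nsym_unit_border_congr v uP) Pv nsym_unit_border_e0.
rewrite sum_nat_const (@eq_card _ _ (predC1 0)) // cardC1 card_mx card_Fp //.
by rewrite muln1 subn1.
Qed.

Lemma nsym_unit0 : nsym_unit 0 = 1%N.
Proof.
rewrite /nsym_unit (bigD1 0) ?trmx0 //= big1 ?addn0.
  by rewrite unitmxE det_mx00 unitr1.
by move=> B /andP[_]; rewrite [B]flatmx0 eqxx.
Qed.

Lemma nsym_unitS n : nsym_unit n.+1 = ((2 ^ n.+1 - odd n.+1) * nsym_unit n)%N.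
Proof.
elim: n => [|n IHn].
  by rewrite [nsym_unit 1](nsym_unit_rec 0) nsym_unit0 big1 // => v; rewrite [v]flatmx0 eqxx.
rewrite nsym_unit_rec2 IHn (expnS 2 n.+1) /=.
case: (2 ^ n.+1)%N (expn_gt0 2 n.+1) => // x _; move: (nsym_unit n) => s.
by case: (odd n) => /=; rewrite !subn0 ?subn1 /=; nia.
Qed.

Lemma card_Bset n : #|Bset (1 + n)| = nsym_unit n.
Proof.
rewrite -sum1_card.
rewrite (eq_bigl (fun A : 'M['F_2]_(1 + n) => (A^T == A) &&
   ((\rank A == n) && (A *m const_mx 1 == 0 :> 'cV_(1 + n))))); last first.
  by move=> A; rewrite inE mulmx_const1_eq0.
rewrite big_mkcondr sum_sym_block exchange_big /=.
under eq_bigr do rewrite exchange_big /=.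
rewrite exchange_big /=; apply: eq_bigr => B symB.
under eq_bigr do under eq_bigr do rewrite mulmx_block_const1_eq0.
rewrite (bigD1 (- (B *m const_mx 1))) //= [X in (_ + X)%N]big1 ?addn0; last first.
  by move=> v /negbTE nv; apply: big1 => a _; rewrite nv !andbF.
rewrite (bigD1 (- ((- (B *m const_mx 1))^T *m const_mx 1))) //=.
rewrite [X in (_ + X)%N]big1 ?addn0; last by move=> a /negbTE ->; rewrite !andbF.
rewrite !eqxx andbT mxrank_sym_border; last exact/eqP.
by rewrite -row_free_unit /row_free; case: (_ == _).
Qed.

Lemma nsym_unitE n : (nsym_unit n)%:R = u_k n.+1 * 2%:R ^+ 'C(n.+1, 2) :> rat.
Proof.
elim: n => [|n IHn]; first by rewrite nsym_unit0 /u_k big_geq // mul1r bin_small.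
rewrite nsym_unitS natrM IHn /u_k [in RHS]binS bin1 exprD.
have -> : n.+2./2 = (n./2).+1 by [].
rewrite /= uphalf_half; have n_eq := odd_double_half n.
case: (odd n) n_eq => /= n_eq; rewrite ?subn0 ?natrB ?expn_gt0 // natrX.
  by rewrite add1n; ring.
rewrite [in RHS]big_nat_recr //=.
have -> : (2 * (n./2).+1 - 1)%N = n.+1 by move: n_eq; rewrite -muln2; lia.
by field; exact: expf_neq0.
Qed.

Theorem mainTheorem7 (k : nat) (hk : (1 <= k)%N) :
  (#|Bset k|%:R : rat) = (u_k k * 2%:R ^+ 'C(k, 2))%R.
Proof. by case: k hk => [//|n] _; rewrite (card_Bset n) nsym_unitE. Qed.
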